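(* For complex numbers $z,w$ with $|z|<1$, $|w|<\frac14$ and $w(1+z)^2\neq z$, $$P(z,w):=\sum_{n\ge0}P_n(z)w^n=\frac{C(w)-(z+1)}{w(1+z)^2-z},$$ $$Q(z,w):=\sum_{n\ge0}Q_n(z)w^n=\frac{(C(w)-(z+1))(z+1)}{w(1+z)^2-z}=P(z,w)(z+1).$$
   Context: $C_n=\frac{1}{n+1}\binom{2n}{n}$ are the Catalan numbers and $C(w)=\sum_{n\ge0}C_nw^n=\frac{1-\sqrt{1-4w}}{2w}$ for $|w|<\frac14$. The Catalan triangle numbers are $B_{n,k}=\frac{k}{n}\binom{2n}{n-k}$ ($n\ge1$, $1\le k\le n$) and $A_{n,k}=\frac{2k-1}{2n+1}\binom{2n+1}{n+1-k}$ ($n\ge0$, $1\le k\le n+1$). For $n\ge0$, $P_n(z)=\sum_{j=0}^n B_{n+1,j+1}z^j$ and $Q_n(z)=\sum_{j=0}^{n+1}A_{n+1,j+1}z^j$. *)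

From Stdlib Require Import Reals.
From Coquelicot Require Import Coquelicot.
Open Scope R_scope.

Fixpoint binom (n k : nat) : nat :=
  match n, k with
  | _, O => 1%nat
  | O, S _ => 0%nat
  | S n', S k' => (binom n' k' + binom n' (S k'))%nat
  end.

Definition catalan (n : nat) : R := INR (binom (2 * n) n) / INR (S n).

Definition catGF (w : C) : C :=
  @iota (CompleteNormedModule.CompleteSpace _ C_CompleteNormedModule) (fun l : C => is_series (fun n => (RtoC (catalan n) * Cpow w n)%C) l).

Definition Btri (n k : nat) : R := INR k / INR n * INR (binom (2 * n) (n - k)).

Definition Atri (n k : nat) : R :=
  (2 * INR k - 1) / (2 * INR n + 1) * INR (binom (2 * n + 1) (n + 1 - k)).

Definition Ppoly (n : nat) (z : C) : C :=
  sum_n (fun j => (RtoC (Btri (S n) (S j)) * Cpow z j)%C) n.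

Definition Qpoly (n : nat) (z : C) : C :=
  sum_n (fun j => (RtoC (Atri (S n) (S j)) * Cpow z j)%C) (S n).

From Stdlib Require Import Reals Lia Lra.
From Coquelicot Require Import Coquelicot.
Open Scope R_scope.

(* The triangle entries are differences of consecutive binomial coefficients,
   B_{m+1,j+1} = binom(2m+1,m+1+j) - binom(2m+1,m+2+j) and
   A_{m+1,j+1} = binom(2m+2,m+1+j) - binom(2m+2,m+2+j).  Pascal's rule then gives
   Q_m = (1+z) P_m and, applied twice together with one Horner step,
   z P_{m+1} = (1+z)^2 P_m - C_{m+1}.  All coefficients are O(4^m), so for
   |w| < 1/4 every series converges, and summing the recursion against w^(m+1)
   yields the linear equation z (P - 1) = w (1+z)^2 P - (C(w) - 1) for the
   generating function P, which is solved for P. *)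

Lemma INR_double n : INR (2 * n) = 2 * INR n.
Proof. rewrite mult_INR; simpl; ring. Qed.

Lemma binom_gt n k : (n < k)%nat -> binom n k = 0%nat.
Proof.
  revert k; induction n as [|n IHn]; intros [|k] Hk; simpl; try lia.
  rewrite !IHn by lia; reflexivity.
Qed.

Lemma INR_binom n k : (k <= n)%nat -> INR (binom n k) = Binomial.C n k.
Proof.
  revert k; induction n as [|n IHn]; intros [|k] Hk.
  - now rewrite C_n_0.
  - lia.
  - now rewrite C_n_0.
  - simpl binom; rewrite plus_INR.
    destruct (Nat.eq_dec k n) as [->|Hkn].
    + rewrite (binom_gt n (S n)), IHn, !C_n_n by lia; simpl; ring.
    + rewrite !IHn by lia; apply pascal; lia.
Qed.

Lemma binom_sym n k : (k <= n)%nat -> binom n k = binom n (n - k).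
Proof.
  intros Hk; apply INR_eq.
  rewrite !INR_binom by lia; now apply pascal_step1.
Qed.

Lemma binom_le_pow2 n k : (binom n k <= 2 ^ n)%nat.
Proof.
  revert k; induction n as [|n IHn]; intros [|k]; simpl; try lia.
  - pose proof (Nat.pow_nonzero 2 n); lia.
  - pose proof (IHn k); pose proof (IHn (S k)); lia.
Qed.

Lemma binom_succ_ratio n k :
  INR (S k) * INR (binom n (S k)) = (INR n - INR k) * INR (binom n k).
Proof.
  destruct (Nat.lt_total k n) as [Hkn | [-> | Hnk]].
  - rewrite !INR_binom, pascal_step3, minus_INR by lia.
    field; apply not_0_INR; lia.
  - rewrite binom_gt by lia; simpl; ring.
  - rewrite !binom_gt by lia; simpl; ring.
Qed.

Definition bdiff (n k : nat) : R := INR (binom n k) - INR (binom n (S k)).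

Lemma bdiff_gt n k : (n < k)%nat -> bdiff n k = 0.
Proof. intros Hk; unfold bdiff; rewrite !binom_gt by lia; simpl; ring. Qed.

Lemma bdiff_pascal n k : bdiff (S n) (S k) = bdiff n k + bdiff n (S k).
Proof. unfold bdiff; simpl binom; rewrite !plus_INR; ring. Qed.

Lemma bdiff_abs_le n k : Rabs (bdiff n k) <= 2 ^ n.
Proof.
  unfold bdiff.
  assert (Hb : forall j, 0 <= INR (binom n j) <= 2 ^ n).
  { intros j; split; [apply pos_INR|].
    apply Rle_trans with (INR (2 ^ n)); [apply le_INR, binom_le_pow2|].
    rewrite pow_INR; right; f_equal; simpl; ring. }
  pose proof (Hb k); pose proof (Hb (S k)).
  apply Rabs_le; lra.
Qed.

Lemma bdiff_ballot n k :
  (INR n + 1) * bdiff n k = (2 * INR k + 1 - INR n) * INR (binom (S n) (S k)).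
Proof.
  pose proof (binom_succ_ratio n k) as Hratio; rewrite S_INR in Hratio.
  unfold bdiff; simpl binom; rewrite plus_INR; nra.
Qed.

Lemma bdiff_middle m : bdiff (2 * m + 1) m = 0.
Proof.
  pose proof (binom_succ_ratio (2 * m + 1) m) as Hratio.
  rewrite S_INR, plus_INR, INR_double, INR_1 in Hratio.
  unfold bdiff; pose proof (pos_INR m).
  apply (Rmult_eq_reg_l (INR m + 1)); lra.
Qed.

Lemma catalan_bdiff m : catalan (S m) = bdiff (2 * m + 1) (S m).
Proof.
  pose proof (bdiff_ballot (2 * m + 1) (S m)) as Hballot.
  pose proof (binom_succ_ratio (2 * S m) (S m)) as Hratio.
  replace (S (2 * m + 1)) with (2 * S m)%nat in Hballot by lia.
  unfold catalan.
  set (D := bdiff _ _) in *.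
  set (x := INR (binom (2 * S m) (S m))) in *.
  set (y := INR (binom (2 * S m) (S (S m)))) in *.
  rewrite ?plus_INR, ?INR_double, ?S_INR, ?INR_1, ?INR_0 in *.
  pose proof (pos_INR m).
  assert (HD : (INR m + 1) * D = y) by lra.
  assert (Hx : x = (INR m + 2) * D).
  { apply (Rmult_eq_reg_l (INR m + 1)); [|lra].
    replace ((INR m + 1) * ((INR m + 2) * D)) with ((INR m + 2) * ((INR m + 1) * D))
      by ring.
    rewrite HD; lra. }
  rewrite Hx; field; lra.
Qed.

Lemma Btri_bdiff m j : (j <= m)%nat -> Btri (S m) (S j) = bdiff (2 * m + 1) (S m + j).
Proof.
  intros Hj.
  pose proof (bdiff_ballot (2 * m + 1) (S m + j)) as Hballot.
  unfold Btri.
  rewrite binom_sym by lia.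
  replace (2 * S m - (S m - S j))%nat with (S (S m + j)) by lia.
  replace (2 * S m)%nat with (S (2 * m + 1)) by lia.
  set (D := bdiff _ _) in *.
  set (y := INR (binom _ _)) in *.
  rewrite ?plus_INR, ?INR_double, ?S_INR, ?INR_1, ?INR_0 in *.
  pose proof (pos_INR m); pose proof (pos_INR j).
  assert (HD : (INR m + 1) * D = (INR j + 1) * y) by lra.
  apply (Rmult_eq_reg_l (INR m + 1)); [|lra].
  rewrite HD; field; lra.
Qed.

Lemma Atri_bdiff m j : (j <= S m)%nat -> Atri (S m) (S j) = bdiff (2 * m + 2) (S m + j).
Proof.
  intros Hj.
  pose proof (bdiff_ballot (2 * m + 2) (S m + j)) as Hballot.
  unfold Atri.
  rewrite binom_sym by lia.
  replace (2 * S m + 1 - (S m + 1 - S j))%nat with (S (S m + j)) by lia.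
  replace (2 * S m + 1)%nat with (S (2 * m + 2)) by lia.
  set (D := bdiff _ _) in *.
  set (y := INR (binom _ _)) in *.
  rewrite ?plus_INR, ?INR_double, ?S_INR, ?INR_1, ?INR_0 in *.
  pose proof (pos_INR m); pose proof (pos_INR j).
  assert (HD : (2 * INR m + 3) * D = (2 * INR j + 1) * y) by lra.
  apply (Rmult_eq_reg_l (2 * INR m + 3)); [|lra].
  rewrite HD; field; lra.
Qed.

Lemma sum_n_zero_tail {G : AbelianMonoid} (a : nat -> G) (L M : nat) :
  (forall j, (L < j)%nat -> a j = zero) -> (L <= M)%nat -> sum_n a M = sum_n a L.
Proof.
  intros Hzero HLM; induction HLM as [|M HLM IH]; [reflexivity|].
  rewrite sum_Sn, IH, Hzero by lia; apply plus_zero_r.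
Qed.

Lemma sum_n_shift {G : AbelianMonoid} (a : nat -> G) (n : nat) :
  sum_n a (S n) = plus (a 0%nat) (sum_n (fun j => a (S j)) n).
Proof. unfold sum_n; rewrite sum_Sn_m, sum_n_m_S by lia; reflexivity. Qed.

Lemma sum_n_Cplus (u v : nat -> C) (n : nat) :
  sum_n (fun j => u j + v j)%C n = (sum_n u n + sum_n v n)%C.
Proof. exact (sum_n_plus u v n). Qed.

Lemma sum_n_Cmult_l (a : C) (u : nat -> C) (n : nat) :
  sum_n (fun j => a * u j)%C n = (a * sum_n u n)%C.
Proof. exact (sum_n_mult_l a u n). Qed.

(* The coefficients vanish once r + j > n, so summing up to j = n loses nothing. *)
Definition bpoly (n r : nat) (z : C) : C :=
  sum_n (fun j => (RtoC (bdiff n (r + j)) * z ^ j)%C) n.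

Lemma bpoly_sum_n n r L z : (n <= r + L)%nat ->
  sum_n (fun j => (RtoC (bdiff n (r + j)) * z ^ j)%C) L = bpoly n r z.
Proof.
  intros HL.
  assert (Htail : forall K, (n <= r + K)%nat -> forall j, (K < j)%nat ->
            (RtoC (bdiff n (r + j)) * z ^ j)%C = zero).
  { intros K HK j Hj; rewrite bdiff_gt by lia; apply Cmult_0_l. }
  unfold bpoly; destruct (Nat.le_ge_cases L n).
  - symmetry; apply sum_n_zero_tail with (1 := Htail L HL); assumption.
  - apply sum_n_zero_tail with (1 := Htail n ltac:(lia)); assumption.
Qed.

Lemma bpoly_horner n r z : bpoly n r z = (bdiff n r + z * bpoly n (S r) z)%C.
Proof.
  rewrite <- (bpoly_sum_n n r (S n)), sum_n_shift by lia.
  unfold bpoly; rewrite <- sum_n_Cmult_l.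
  change (bdiff n (r + 0) * z ^ 0 + sum_n (fun j => bdiff n (r + S j) * z ^ S j) n
          = bdiff n r + sum_n (fun j => z * (bdiff n (S r + j) * z ^ j)) n)%C.
  rewrite Nat.add_0_r; f_equal; [ring|].
  apply sum_n_ext; intros j; rewrite <- plus_n_Sm; simpl; ring.
Qed.

Lemma bpoly_pascal n r z : bpoly (S n) (S r) z = (bpoly n r z + bpoly n (S r) z)%C.
Proof.
  rewrite <- (bpoly_sum_n n r (S n)), <- (bpoly_sum_n n (S r) (S n)) by lia.
  unfold bpoly; rewrite <- sum_n_Cplus.
  apply sum_n_ext; intros j.
  rewrite plus_Sn_m, bdiff_pascal, RtoC_plus; simpl; ring.
Qed.

Lemma Ppoly_bpoly m z : Ppoly m z = bpoly (2 * m + 1) (S m) z.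
Proof.
  rewrite <- (bpoly_sum_n _ _ m) by lia.
  apply sum_n_ext_loc; intros j Hj; now rewrite Btri_bdiff.
Qed.

Lemma Qpoly_bpoly m z : Qpoly m z = bpoly (2 * m + 2) (S m) z.
Proof.
  rewrite <- (bpoly_sum_n _ _ (S m)) by lia.
  apply sum_n_ext_loc; intros j Hj; now rewrite Atri_bdiff.
Qed.

Lemma Qpoly_Ppoly m z : Qpoly m z = ((1 + z) * Ppoly m z)%C.
Proof.
  rewrite Qpoly_bpoly, Ppoly_bpoly.
  replace (2 * m + 2)%nat with (S (2 * m + 1)) by lia.
  rewrite bpoly_pascal, (bpoly_horner _ m), bdiff_middle; ring.
Qed.

Lemma Ppoly_rec m z :
  (z * Ppoly (S m) z = (1 + z) ^ 2 * Ppoly m z - catalan (S m))%C.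
Proof.
  rewrite !Ppoly_bpoly.
  replace (2 * S m + 1)%nat with (S (S (2 * m + 1))) by lia.
  rewrite !bpoly_pascal, (bpoly_horner _ m), bdiff_middle.
  rewrite (bpoly_horner _ (S m)), <- catalan_bdiff; simpl; ring.
Qed.

Lemma Ppoly_0 z : Ppoly 0 z = 1%C.
Proof.
  unfold Ppoly; rewrite sum_O.
  replace (Btri 1 1) with 1 by (unfold Btri; simpl; field).
  simpl; ring.
Qed.

Lemma catalan_0 : catalan 0 = 1.
Proof. unfold catalan; simpl; field. Qed.

Lemma geom_partial_sum_le q K N : 0 <= q < 1 -> 0 <= K ->
  sum_n (fun j => q ^ j * K) N <= K / (1 - q).
Proof.
  intros Hq HK.
  rewrite sum_n_Reals, <- scal_sum, tech3 by lra.
  pose proof (pow_le q (S N) (proj1 Hq)).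
  assert (Hinv : 0 < / (1 - q)) by (apply Rinv_0_lt_compat; lra).
  unfold Rdiv; apply Rmult_le_compat_l; [assumption|].
  rewrite <- (Rmult_1_l (/ (1 - q))) at 2.
  apply Rmult_le_compat_r; lra.
Qed.

Lemma Ppoly_norm_le m z : Cmod z < 1 -> Cmod (Ppoly m z) <= 2 / (1 - Cmod z) * 4 ^ m.
Proof.
  intros Hz.
  rewrite Ppoly_bpoly, <- (bpoly_sum_n _ _ m) by lia.
  set (f := fun j => (RtoC (bdiff (2 * m + 1) (S m + j)) * z ^ j)%C).
  eapply Rle_trans; [exact (norm_sum_n_m f 0 m)|].
  eapply Rle_trans.
  { apply (sum_n_m_le _ (fun j => Cmod z ^ j * 2 ^ (2 * m + 1))).
    intros j; change (Cmod (RtoC (bdiff (2 * m + 1) (S m + j)) * z ^ j)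
                      <= Cmod z ^ j * 2 ^ (2 * m + 1)).
    rewrite Cmod_mult, Cmod_R, Cmod_pow, (Rmult_comm (Cmod z ^ j)).
    apply Rmult_le_compat_r; [apply pow_le, Cmod_ge_0 | apply bdiff_abs_le]. }
  pose proof (Cmod_ge_0 z).
  eapply Rle_trans; [apply geom_partial_sum_le; [lra | apply pow_le; lra]|].
  replace (2 ^ (2 * m + 1)) with (2 * 4 ^ m)
    by (rewrite pow_add, pow_mult; replace (2 ^ 2) with 4 by ring; ring).
  right; field; lra.
Qed.

Lemma catalan_abs_le n : Rabs (catalan n) <= 4 ^ n.
Proof.
  unfold catalan.
  pose proof (binom_le_pow2 (2 * n) n) as Hb; apply le_INR in Hb.
  rewrite pow_INR, pow_mult in Hb; replace (INR 2 ^ 2) with 4 in Hb by (simpl; ring).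
  pose proof (pos_INR (binom (2 * n) n)).
  assert (Hn : 1 <= INR (S n)) by (rewrite S_INR; pose proof (pos_INR n); lra).
  rewrite Rabs_pos_eq by (apply Rdiv_le_0_compat; lra).
  apply Rle_trans with (INR (binom (2 * n) n)); [|assumption].
  unfold Rdiv; rewrite <- (Rmult_1_r (INR (binom (2 * n) n))) at 2.
  apply Rmult_le_compat_l; [assumption|].
  rewrite <- Rinv_1; apply Rinv_le_contravar; lra.
Qed.

Lemma ex_series_four_pow_bound (c : nat -> C) (K : R) (w : C) :
  Cmod w < 1 / 4 -> (forall n, Cmod (c n) <= K * 4 ^ n) ->
  ex_series (fun n => c n * w ^ n)%C.
Proof.
  intros Hw Hc.
  apply (@ex_series_le C_AbsRing C_CompleteNormedModule _ (fun n => K * (4 * Cmod w) ^ n)).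
  - intros n; change (Cmod (c n * w ^ n) <= K * (4 * Cmod w) ^ n).
    rewrite Cmod_mult, Cmod_pow, Rpow_mult_distr, <- Rmult_assoc.
    apply Rmult_le_compat_r; [apply pow_le, Cmod_ge_0 | apply Hc].
  - apply (ex_series_scal_l K (fun n => (4 * Cmod w) ^ n)), ex_series_geom.
    pose proof (Cmod_ge_0 w); rewrite Rabs_pos_eq; lra.
Qed.

Lemma is_series_C_unique (a : nat -> C) (l1 l2 : C) :
  is_series a l1 -> is_series a l2 -> l1 = l2.
Proof. exact (filterlim_locally_unique (sum_n a) l1 l2). Qed.

Lemma is_series_C_tail (a : nat -> C) (l : C) :
  is_series a l -> is_series (fun n => a (S n)) (l - a 0%nat)%C.
Proof.
  intros Ha; apply is_series_incr_1.
  match goal with |- is_series _ ?l' => replace l' with l; [exact Ha|] end.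
  change (l = l - a 0%nat + a 0%nat)%C; ring.
Qed.

Lemma catGF_correct w L :
  is_series (fun n => RtoC (catalan n) * w ^ n)%C L -> catGF w = L.
Proof.
  intros HL; unfold catGF.
  apply (@iota_unique C_AbsRing C_CompleteNormedModule); [|exact HL].
  intros L' HL'; exact (is_series_C_unique _ _ _ HL' HL).
Qed.

Lemma Ppoly_GF_equation (z w P L : C) :
  is_series (fun n => Ppoly n z * w ^ n)%C P ->
  is_series (fun n => RtoC (catalan n) * w ^ n)%C L ->
  (P * (w * (1 + z) ^ 2 - z) = L - (z + 1))%C.
Proof.
  intros HP HL.
  (* Sum z P_{n+1} w^(n+1) in two ways: as a tail of P, and through Ppoly_rec. *)
  pose proof (is_series_scal z _ _ (is_series_C_tail _ _ HP)) as Hleft.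
  pose proof (is_series_minus _ _ _ _ (is_series_scal ((1 + z) ^ 2 * w)%C _ _ HP)
                (is_series_C_tail _ _ HL)) as Hright.
  assert (Hterms : forall n,
    plus (scal ((1 + z) ^ 2 * w)%C (Ppoly n z * w ^ n)%C)
         (opp (RtoC (catalan (S n)) * w ^ S n)%C)
    = scal z (Ppoly (S n) z * w ^ S n)%C).
  { intros n; change ((1 + z) ^ 2 * w * (Ppoly n z * w ^ n) - catalan (S n) * w ^ S n
                      = z * (Ppoly (S n) z * w ^ S n))%C.
    replace (z * (Ppoly (S n) z * w ^ S n))%C with ((z * Ppoly (S n) z) * w ^ S n)%C by ring.
    rewrite Ppoly_rec; simpl; ring. }
  apply (is_series_ext _ _ _ Hterms) in Hright.
  pose proof (is_series_C_unique _ _ _ Hleft Hright) as Hsum.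
  change (z * (P - Ppoly 0 z * 1) = (1 + z) ^ 2 * w * P - (L - catalan 0 * 1))%C in Hsum.
  rewrite Ppoly_0, catalan_0, !Cmult_1_r in Hsum.
  assert (HL' : L = ((1 + z) ^ 2 * w * P - z * (P - 1) + 1)%C) by (rewrite Hsum; ring).
  rewrite HL'; ring.
Qed.

Theorem theorem2p7 (z w : C) :
  Cmod z < 1 -> Cmod w < 1 / 4 ->
  (w * (1 + z) ^ 2)%C <> z ->
  is_series (fun n => (Ppoly n z * Cpow w n)%C)
    ((catGF w - (z + 1)) / (w * (1 + z) ^ 2 - z))%C /\
  is_series (fun n => (Qpoly n z * Cpow w n)%C)
    ((catGF w - (z + 1)) * (z + 1) / (w * (1 + z) ^ 2 - z))%C /\
  ((catGF w - (z + 1)) * (z + 1) / (w * (1 + z) ^ 2 - z))%C =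
    ((catGF w - (z + 1)) / (w * (1 + z) ^ 2 - z) * (z + 1))%C.
Proof.
  intros Hz Hw Hpole.
  pose proof (Cminus_eq_contra _ _ Hpole) as Hden.
  destruct (ex_series_four_pow_bound (fun n => Ppoly n z) _ w Hw
              (fun n => Ppoly_norm_le n z Hz)) as [P HP].
  destruct (ex_series_four_pow_bound (fun n => RtoC (catalan n)) 1 w Hw) as [L HL].
  { intros n; rewrite Cmod_R, Rmult_1_l; apply catalan_abs_le. }
  change C in P, L.
  rewrite (catGF_correct w L HL).
  assert (HPval : P = ((L - (z + 1)) / (w * (1 + z) ^ 2 - z))%C).
  { rewrite <- (Ppoly_GF_equation z w P L HP HL); field; exact Hden. }
  rewrite <- HPval.
  replace ((L - (z + 1)) * (z + 1) / (w * (1 + z) ^ 2 - z))%C with ((1 + z) * P)%C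
    by (rewrite HPval; field; exact Hden).
  split; [exact HP|]; split; [|ring].
  apply (is_series_ext (fun n => (1 + z) * (Ppoly n z * w ^ n))%C).
  - intros n; rewrite Qpoly_Ppoly; apply Cmult_assoc.
  - exact (is_series_scal (1 + z)%C _ _ HP).
Qed.
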